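(* Let $v\equiv 3\pmod 6$. If a $(v,3,2)$-BIBD $(X,\mathcal{A})$ has a strong nesting $\phi:\mathcal{A}\to Y$ with $X\subseteq Y$ and $|Y|=w$, then $w\ge (3v+1)/2$.
   Context: A $(v,k,\lambda)$-BIBD is a pair $(X,\mathcal{A})$ where $X$ is a set of $v$ points and $\mathcal{A}$ is a multiset of $k$-subsets of $X$ (blocks) such that every pair of distinct points lies in exactly $\lambda$ blocks. Given a $(v,k,\lambda)$-BIBD $(X,\mathcal{A})$ and a set $Y\supseteq X$ with $|Y|=w$, a map $\phi:\mathcal{A}\to Y$ is a strong nesting if (1) $\phi(A)\notin A$ for every block $A\in\mathcal{A}$, and (2) the multiset of pairs $\{\{x,\phi(A)\}: A\in\mathcal{A},\ x\in A\}$ (one pair for each block $A$, counted with multiplicity in $\mathcal{A}$, and each $x\in A$) consists of distinct pairs. *)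

From mathcomp Require Import all_boot.
Set Implicit Arguments. Unset Strict Implicit. Unset Printing Implicit Defensive.

(* The multiset of blocks is given as a family blk : B -> {set Y} indexed by a
   finite type B (repeated blocks = distinct indices with equal images). *)
Definition is_bibd (Y B : finType) (X : {set Y}) (blk : B -> {set Y})
    (k lambda : nat) : Prop :=
  (forall b, blk b \subset X) /\
  (forall b, #|blk b| = k) /\
  (forall x y, x \in X -> y \in X -> x != y ->
     #|[set b | (x \in blk b) && (y \in blk b)]| = lambda).

Definition strong_nesting (Y B : finType) (blk : B -> {set Y}) (phi : B -> Y)
    : Prop :=
  (forall b, phi b \notin blk b) /\
  (forall b1 b2 x1 x2, x1 \in blk b1 -> x2 \in blk b2 ->
     [set x1; phi b1] = [set x2; phi b2] -> b1 = b2 /\ x1 = x2).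

(* Let n(y) be the number of blocks nested at y and r(y) the number of blocks
   through y.  By strong nesting the pairs {x, y} with x in a block nested at y
   and the pairs {y, phi b} with y in b are pairwise distinct, so their other
   endpoints are k n(y) + r(y) distinct points of Y - {y}; for y outside X the
   first kind alone gives k n(y) <= v.  In a (v,3,2)-BIBD r = v - 1 on X and
   sum_y n(y) = b = v(v-1)/3, so writing v = 6t+3, the assumption w <= 9t+4
   would give b <= (2t+1)(6t+1) < b. *)

From mathcomp Require Import all_boot zify.
Set Implicit Arguments. Unset Strict Implicit. Unset Printing Implicit Defensive.

Lemma double_count (I J : finType) (S : {set J}) (R : I -> J -> bool) :
  \sum_(j in S) #|[set i | R i j]| = \sum_i #|[set j in S | R i j]|.
Proof.
under eq_bigr do rewrite -sum1dep_card big_mkcond.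
rewrite exchange_big; apply: eq_bigr => i _.
rewrite -sum1dep_card big_mkcond [RHS]big_mkcond.
by apply: eq_bigr => j _; case: (j \in S).
Qed.

Definition blocks_through (Y B : finType) (blk : B -> {set Y}) (x : Y) :=
  [set b | x \in blk b].

Section Designs.

Variables (Y B : finType) (X : {set Y}) (blk : B -> {set Y}) (k : nat).
Hypothesis blk_sub : forall b, blk b \subset X.
Hypothesis card_blk : forall b, #|blk b| = k.

Lemma sum_replication :
  \sum_(x in X) #|blocks_through blk x| = #|B| * k.
Proof.
rewrite double_count -sum_nat_const; apply: eq_bigr => b _.
rewrite -(card_blk b); apply: eq_card => x; rewrite !inE andb_idl //.
exact: (subsetP (blk_sub b)).
Qed.

Lemma bibd_replication lambda x :
  (forall y, y \in X -> x != y ->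
     #|[set b | (x \in blk b) && (y \in blk b)]| = lambda) ->
  x \in X -> #|blocks_through blk x| * (k - 1) = lambda * (#|X| - 1).
Proof.
move=> pair_count xX.
have count_by_points :
    \sum_(y in X :\ x) #|[set b | (x \in blk b) && (y \in blk b)]|
    = lambda * (#|X| - 1).
  rewrite (eq_bigr (fun=> lambda)) => [|y /setD1P[yx yX]]; last first.
    by apply: pair_count; rewrite // eq_sym.
  by rewrite sum_nat_const (cardsD1 x X) xX mulnC; lia.
rewrite -count_by_points double_count -sum_nat_cond_const big_mkcond.
apply: eq_bigr => b _; apply/esym; case: ifP => xb /=; last first.
  by apply/eqP; rewrite cards_eq0; apply/eqP/setP => y; rewrite !inE andbF.
have -> : [set y in X :\ x | y \in blk b] = blk b :\ x.
  apply/setP => y; rewrite !inE -andbA; congr (_ && _); apply: andb_idl.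
  exact: (subsetP (blk_sub b)).
by have := cardsD1 x (blk b); rewrite xb card_blk; lia.
Qed.

End Designs.

Lemma card_rel_pairs (I J : finType) (R : I -> J -> bool) :
  #|[set p : I * J | R p.1 p.2]| = \sum_i #|[set j | R i j]|.
Proof.
rewrite -sum1dep_card -(pair_big_dep xpredT R (fun _ _ => 1)) /=.
by apply: eq_bigr => i _; rewrite sum1dep_card.
Qed.

Definition nested_at (Y B : finType) (phi : B -> Y) (y : Y) :=
  [set b | phi b == y].

Definition nest_partners (Y B : finType) (blk : B -> {set Y}) (phi : B -> Y)
    (y : Y) :=
  [set x | [exists b, (phi b == y) && (x \in blk b)]].

Lemma sum_card_nested_at (Y B : finType) (phi : B -> Y) :
  \sum_y #|nested_at phi y| = #|B|.
Proof.
rewrite -sum1_card (partition_big phi predT) //=.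
by apply: eq_bigr => y _; rewrite -sum1dep_card.
Qed.

Section Nestings.

Variables (Y B : finType) (blk : B -> {set Y}) (phi : B -> Y) (k : nat).
Hypothesis card_blk : forall b, #|blk b| = k.
Hypothesis nest : strong_nesting blk phi.

Lemma card_nest_partners y :
  #|nest_partners blk phi y| = k * #|nested_at phi y|.
Proof.
have [_ nest_inj] := nest.
pose P := [set p : B * Y | (phi p.1 == y) && (p.2 \in blk p.1)].
have -> : nest_partners blk phi y = [set p.2 | p in P].
  apply/setP => x; rewrite inE; apply/existsP/imsetP => [[b yb]|[[b x'] Pb ->]].
    by exists (b, x); rewrite ?inE.
  by exists b; rewrite inE in Pb.
rewrite card_in_imset => [|[b1 x1] [b2 x2]]; last first.
  rewrite !inE /= => /andP[/eqP phi1 xb1] /andP[/eqP phi2 xb2] x12; subst x2.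
  have same_pair : [set x1; phi b1] = [set x1; phi b2] by rewrite phi1 phi2.
  by have [-> _] := nest_inj b1 b2 x1 x1 xb1 xb2 same_pair.
rewrite (card_rel_pairs (fun b x => (phi b == y) && (x \in blk b))).
rewrite mulnC -sum_nat_cond_const.
rewrite [RHS]big_mkcond; apply: eq_bigr => b _; case: eqP => _ /=.
  by rewrite -(card_blk b); apply: eq_card => x; rewrite inE.
by apply/eqP; rewrite cards_eq0; apply/eqP/setP => x; rewrite !inE.
Qed.

Lemma card_nest_images y :
  #|phi @: blocks_through blk y| = #|blocks_through blk y|.
Proof.
have [_ nest_inj] := nest.
apply: card_in_imset => b1 b2; rewrite !inE => yb1 yb2 phi12.
have same_pair : [set y; phi b1] = [set y; phi b2] by rewrite phi12.
by have [] := nest_inj b1 b2 y y yb1 yb2 same_pair.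
Qed.

Lemma disjoint_nest_partners_images y :
  [disjoint nest_partners blk phi y & phi @: blocks_through blk y].
Proof.
have [phi_out nest_inj] := nest.
apply/pred0P => z; rewrite /= inE; apply/negP => /andP[].
case/existsP => b2 /andP[/eqP phi2 zb2] /imsetP[b1]; rewrite inE => yb1 z1.
have same_pair : [set y; phi b1] = [set z; phi b2] by rewrite -z1 phi2 setUC.
have [_ yz] := nest_inj b1 b2 y z yb1 zb2 same_pair.
by move: (phi_out b1); rewrite -z1 -yz yb1.
Qed.

Lemma nesting_local_bound y :
  k * #|nested_at phi y| + #|blocks_through blk y| < #|Y|.
Proof.
have [phi_out _] := nest.
rewrite -card_nest_partners -card_nest_images -cardsUI.
rewrite (disjoint_setI0 (disjoint_nest_partners_images y)) cards0 addn0.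
apply: (@leq_ltn_trans #|[set~ y]|).
  apply/subset_leq_card/subsetP => z.
  rewrite !inE => /orP[/existsP[b /andP[/eqP <- zb]] | /imsetP[b yb ->]].
    by apply: contraTneq zb => ->; exact: phi_out.
  by apply: contraTneq yb => <-; rewrite ?inE; exact: phi_out.
by rewrite cardsC1 ltn_predL; apply/card_gt0P; exists y.
Qed.

Lemma nest_partners_sub (X : {set Y}) y :
  (forall b, blk b \subset X) -> nest_partners blk phi y \subset X.
Proof.
move=> blk_sub; apply/subsetP => x; rewrite inE => /existsP[b /andP[_ xb]].
exact: (subsetP (blk_sub b)).
Qed.

Lemma nested_block_count_le (X : {set Y}) r :
  0 < k -> (forall b, blk b \subset X) ->
  (forall x, x \in X -> #|blocks_through blk x| = r) ->
  #|B| <= #|X| * ((#|Y| - r.+1) %/ k) + #|~: X| * (#|X| %/ k).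
Proof.
move=> k_gt0 blk_sub repl.
rewrite -(sum_card_nested_at phi) (bigID (mem X)) /= leq_add //.
  rewrite -sum_nat_const leq_sum // => y yX; rewrite leq_divRL // mulnC.
  apply: leq_trans (leq_sub2r r.+1 (nesting_local_bound y)).
  by rewrite repl // subSS addnK.
rewrite -sum_nat_const (eq_bigl (mem (~: X))) => [|y]; last by rewrite !inE.
apply: leq_sum => y _; rewrite leq_divRL // mulnC -card_nest_partners.
exact/subset_leq_card/nest_partners_sub.
Qed.

End Nestings.

Lemma nesting_count_arith v w b :
  v %% 6 = 3 -> b * 3 = v * (v - 1) ->
  b <= v * ((w - v) %/ 3) + (w - v) * (v %/ 3) -> 3 * v + 1 <= 2 * w.
Proof.
move=> v_mod b_eq b_le; rewrite leqNgt; apply/negP => w_small.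
have v_eq : v = 6 * (v %/ 6) + 3 by lia.
set t := v %/ 6 in v_eq.
have inside_le : v * ((w - v) %/ 3) <= v * t by apply: leq_mul => //; lia.
have outside_le : (w - v) * (v %/ 3) <= (3 * t + 1) * (2 * t + 1).
  by apply: leq_mul; lia.
nia.
Qed.

Theorem lemma4p2 (Y B : finType) (X : {set Y}) (blk : B -> {set Y})
    (phi : B -> Y) :
  #|X| %% 6 = 3 ->
  is_bibd X blk 3 2 ->
  strong_nesting blk phi ->
  3 * #|X| + 1 <= 2 * #|Y|.
Proof.
move=> v_mod [blk_sub [card_blk pair_count]] nest.
have repl x : x \in X -> #|blocks_through blk x| = #|X| - 1.
  move=> xX; have := bibd_replication blk_sub card_blk (pair_count x^~ xX) xX.
  lia.
have count_blocks : #|B| * 3 = #|X| * (#|X| - 1).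
  by rewrite -(sum_replication blk_sub card_blk) (eq_bigr _ repl) sum_nat_const.
have count_le := nested_block_count_le card_blk nest (isT : 0 < 3) blk_sub repl.
have card_compl : #|~: X| = #|Y| - #|X| by rewrite -(cardsC X) addKn.
have succ_repl : (#|X| - 1).+1 = #|X| by lia.
rewrite card_compl succ_repl in count_le.
exact: nesting_count_arith v_mod count_blocks count_le.
Qed.
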